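(* Let $(T_1,T_2,T_3)$ be an associative Clifford extension over $(V,S^0,S^1)$. Then for any $v_1,v_2\in V$ the linear operator on $T_2$ given by $t\mapsto \big(v_1(v_2s^0)\big)\big(s^0t\big)$ is the same for all unit vectors $s^0\in S^0$. (Here $v_1(v_2s^0)\in S^0$, $s^0t\in T_1$, and the result lies in $T_2$.)
   Context: All spaces are finite-dimensional real Euclidean. For a Euclidean space $X$, $\mathrm{Cl}(X)$ is the Clifford algebra with $x\cdot x=-|x|^2$; a ''$\mathrm{Cl}(X)$-module $Y\oplus Z$'' is a $\mathbb Z/2$-graded module with $X\cdot Y\subset Z$, $X\cdot Z\subset Y$, $Y\perp Z$, each $x\in X$ acting skew-symmetrically; the action is written $xy$. Let $V\neq0$ be Euclidean and $S^0\oplus S^1$ a nonzero $\mathrm{Cl}(V)$-module. A Clifford extension over $(V,S^0,S^1)$ is a triple of Euclidean spaces $T_1,T_2,T_3$ of equal dimension together with a $\mathrm{Cl}(V)$-module structure on $T_2\oplus T_3$, a $\mathrm{Cl}(S^0)$-module structure on $T_1\oplus T_2$, and a $\mathrm{Cl}(S^1)$-module structure on $T_1\oplus T_3$. It is associative if $(vs^0)t_1=v(s^0t_1)$ for all $v\in V,s^0\in S^0,t_1\in T_1$. *)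

(* Euclidean spaces of dimension n are modeled as 'rV[R]_n
   with the standard inner product, R : realType. *)
From HB Require Import structures.
From mathcomp Require Import all_boot all_order all_algebra.
From mathcomp Require Import reals.
Set Implicit Arguments. Unset Strict Implicit. Unset Printing Implicit Defensive.
Import Order.TTheory GRing.Theory Num.Theory.
Local Open Scope ring_scope.

Definition dotv (R : realType) (n : nat) (u v : 'rV[R]_n) : R := (u *m v^T) 0 0.

(* A Z/2-graded Cl(X)-module Y (+) Z, with X = R^p, Y = R^a, Z = R^b
   (Y and Z orthogonal, as the orthogonal direct sum).
   actY x y = x y in Z for y in Y,  actZ x z = x z in Y for z in Z. *)
Record CliffordModule (R : realType) (p a b : nat) := {
  actY : 'rV[R]_p -> 'rV[R]_a -> 'rV[R]_b;
  actZ : 'rV[R]_p -> 'rV[R]_b -> 'rV[R]_a;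
  actY_linl : forall (c : R) x x' y, actY (c *: x + x') y = c *: actY x y + actY x' y;
  actY_linr : forall (c : R) x y y', actY x (c *: y + y') = c *: actY x y + actY x y';
  actZ_linl : forall (c : R) x x' z, actZ (c *: x + x') z = c *: actZ x z + actZ x' z;
  actZ_linr : forall (c : R) x z z', actZ x (c *: z + z') = c *: actZ x z + actZ x z';
  act_skew : forall x y z, dotv (actY x y) z = - dotv y (actZ x z);
  act_cliffY : forall x y, actZ x (actY x y) = - (dotv x x) *: y;
  act_cliffZ : forall x z, actY x (actZ x z) = - (dotv x x) *: z
}.

(* Clifford extension (T1,T2,T3) over (V,S0,S1), with dim V = p,
   dim S0 = n0, dim S1 = n1, dim T_i = m, given the Cl(V)-module S0 (+) S1 MS. *)
Record CliffordExtension (R : realType) (p n0 n1 m : nat) := {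
  modV  : CliffordModule R p m m;    (* Cl(V)-module  T2 (+) T3 *)
  modS0 : CliffordModule R n0 m m;   (* Cl(S0)-module T1 (+) T2 *)
  modS1 : CliffordModule R n1 m m    (* Cl(S1)-module T1 (+) T3 *)
}.

Definition associative_ext (R : realType) (p n0 n1 m : nat)
  (MS : CliffordModule R p n0 n1) (E : CliffordExtension R p n0 n1 m) : Prop :=
  forall (v : 'rV[R]_p) (s0 : 'rV[R]_n0) (t1 : 'rV[R]_m),
    actY (modS1 E) (actY MS v s0) t1 = actY (modV E) v (actY (modS0 E) s0 t1).

(* With c = |v1|^2, associativity applied to s0 = v1 s1 and followed by the
   action of v1 on T3 gives c (v1 s1) x = c v1 (s1 x), hence (v1 s1) x = v1 (s1 x)
   for s1 in S1 and x in T1 (trivially so if v1 = 0).  Taking s1 = v2 s0 and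
   x = s0 t, associativity once more gives (v2 s0)(s0 t) = v2 (s0 (s0 t)) = - v2 t
   for a unit s0, so the operator equals t |-> - v1 (v2 t), which does not
   depend on s0. *)
From HB Require Import structures.
From mathcomp Require Import all_boot all_order all_algebra.
From mathcomp Require Import reals.
Set Implicit Arguments. Unset Strict Implicit. Unset Printing Implicit Defensive.
Import Order.TTheory GRing.Theory Num.Theory.
Local Open Scope ring_scope.

Lemma dotvv_eq0 (R : realType) (n : nat) (v : 'rV[R]_n) : dotv v v = 0 -> v = 0.
Proof.
rewrite /dotv mxE => sum_sq_eq0; apply/matrixP => i j; rewrite (ord1 i) !mxE.
have sq_ge0 (k : 'I_n) : xpredT k -> 0 <= v 0 k * v^T k 0.
  by move=> _; rewrite mxE -expr2 sqr_ge0.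
have /eqP := psumr_eq0P sq_ge0 sum_sq_eq0 (i := j) isT.
by rewrite mxE mulf_eq0 orbb => /eqP.
Qed.

Section CliffordModuleTheory.
Variables (R : realType) (p a b : nat) (M : CliffordModule R p a b).

Lemma actY0l y : actY M 0 y = 0.
Proof. by have := actY_linl M (-1) 0 0 y; rewrite scaler0 addr0 scaleN1r addNr. Qed.

Lemma actZ0l z : actZ M 0 z = 0.
Proof. by have := actZ_linl M (-1) 0 0 z; rewrite scaler0 addr0 scaleN1r addNr. Qed.

Lemma actY_scalel c x y : actY M (c *: x) y = c *: actY M x y.
Proof. by have := actY_linl M c x 0 y; rewrite addr0 actY0l addr0. Qed.

Lemma actZ_scaler c x z : actZ M x (c *: z) = c *: actZ M x z.
Proof.
have actZ_x0 : actZ M x 0 = 0.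
  by have := actZ_linr M (-1) x 0 0; rewrite scaler0 addr0 scaleN1r addNr.
by have := actZ_linr M c x z 0; rewrite addr0 actZ_x0 addr0.
Qed.

End CliffordModuleTheory.

Section AssociativeExtension.
Variables (R : realType) (p n0 n1 m : nat).
Variables (MS : CliffordModule R p n0 n1) (E : CliffordExtension R p n0 n1 m).
Hypothesis assocE : associative_ext MS E.

Lemma assoc_S1_T1 v s1 t1 :
  actY (modS0 E) (actZ MS v s1) t1 = actZ (modV E) v (actY (modS1 E) s1 t1).
Proof.
have [->|v_neq0] := eqVneq v 0; first by rewrite !actZ0l actY0l.
have vv_neq0 : dotv v v != 0 by apply: contra v_neq0 => /eqP/dotvv_eq0 ->.
apply: (scalerI vv_neq0); apply: oppr_inj; rewrite -!scaleNr.
rewrite -(act_cliffY (modV E)) -assocE act_cliffZ.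
by rewrite actY_scalel actZ_scaler.
Qed.

Lemma assoc_cliffS0 v s0 t :
  actY (modS1 E) (actY MS v s0) (actZ (modS0 E) s0 t)
  = actY (modV E) v (- dotv s0 s0 *: t).
Proof. by rewrite assocE act_cliffZ. Qed.

End AssociativeExtension.

Theorem mainTheorem7 (R : realType) (p n0 n1 m : nat)
  (MS : CliffordModule R p n0 n1) (E : CliffordExtension R p n0 n1 m) :
  (0 < p)%N -> (0 < n0 + n1)%N ->
  associative_ext MS E ->
  forall (v1 v2 : 'rV[R]_p) (s s' : 'rV[R]_n0),
    dotv s s = 1 -> dotv s' s' = 1 ->
    forall t : 'rV[R]_m,
      actY (modS0 E) (actZ MS v1 (actY MS v2 s)) (actZ (modS0 E) s t)
      = actY (modS0 E) (actZ MS v1 (actY MS v2 s')) (actZ (modS0 E) s' t).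
Proof.
move=> _ _ assocE v1 v2 s s' unit_s unit_s' t.
by rewrite !(assoc_S1_T1 assocE) !(assoc_cliffS0 assocE) unit_s unit_s'.
Qed.
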